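(* Let $n_x,n_y,n_z$ be pairwise relatively prime positive integers. Every knot in $\mathcal{L}(n_x,n_y,n_z)$ can be represented (up to mirror image) as a Lissajous knot with frequencies $(n_x,n_y,n_z)$, with $\phi_x=0$, and with phase shift pair $(\phi_y,\phi_z)\in[0,\frac{\pi}{n_x}]\times[0,\pi]$.
   Context: A Lissajous knot is a knot in $\mathbb{R}^3$ admitting a parameterization $K(t)=(\cos(n_xt+\phi_x),\cos(n_yt+\phi_y),\cos(n_zt+\phi_z))$, $0\le t\le 2\pi$, where the frequencies $n_x,n_y,n_z$ are integers and the phase shifts $\phi_x,\phi_y,\phi_z$ are real numbers (chosen so that the curve is embedded). $\mathcal{L}(n_x,n_y,n_z)$ denotes the set of knot types of all Lissajous knots with frequencies $n_x,n_y,n_z$, where a knot and its mirror image are considered equivalent. *)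

From Stdlib Require Import Reals Lra Arith.
Open Scope R_scope.

Definition pt : Type := (R * R * R)%type.

Definition lissajous (nx ny nz : nat) (px py pz : R) (t : R) : pt :=
  (cos (INR nx * t + px), cos (INR ny * t + py), cos (INR nz * t + pz)).

Definition embedded (nx ny nz : nat) (px py pz : R) : Prop :=
  forall s t, 0 <= s < 2 * PI -> 0 <= t < 2 * PI ->
    lissajous nx ny nz px py pz s = lissajous nx ny nz px py pz t -> s = t.

Definition curve_image (K : R -> pt) : pt -> Prop :=
  fun p => exists t, 0 <= t <= 2 * PI /\ K t = p.

Definition dist3 (p q : pt) : R :=
  let '(x1, y1, z1) := p in let '(x2, y2, z2) := q in
  Rmax (Rabs (x1 - x2)) (Rmax (Rabs (y1 - y2)) (Rabs (z1 - z2))).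

Definition cont3 (f : pt -> pt) : Prop :=
  forall x eps, 0 < eps -> exists delta, 0 < delta /\
    forall y, dist3 y x < delta -> dist3 (f y) (f x) < eps.

Definition homeo3 (f : pt -> pt) : Prop :=
  exists g : pt -> pt,
    (forall x, g (f x) = x) /\ (forall y, f (g y) = y) /\ cont3 f /\ cont3 g.

Definition ambient_isotopy (H : R -> pt -> pt) : Prop :=
  (forall x, H 0 x = x) /\
  (forall t, 0 <= t <= 1 -> homeo3 (H t)) /\
  (forall t x eps, 0 <= t <= 1 -> 0 < eps -> exists delta, 0 < delta /\
     forall s y, 0 <= s <= 1 -> Rabs (s - t) < delta -> dist3 y x < delta ->
       dist3 (H s y) (H t x) < eps).

Definition knot_equiv (A B : pt -> Prop) : Prop :=
  exists H, ambient_isotopy H /\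
    forall p, B p <-> exists q, A q /\ H 1 q = p.

Definition mirror_pt (p : pt) : pt := let '(x, y, z) := p in (x, y, - z).
Definition mirror (A : pt -> Prop) : pt -> Prop := fun p => A (mirror_pt p).

Definition knot_equiv_up_to_mirror (A B : pt -> Prop) : Prop :=
  knot_equiv A B \/ knot_equiv A (mirror B).

(* Translating the parameter, t |-> t + c, and shifting a phase by an integer multiple of
   PI change a Lissajous curve only by a reparametrization and by sign changes of the
   coordinates.  Taking c = (k PI - px) / nx makes the x-phase 0 while moving the y-phase by
   ny k PI / nx; as gcd(nx, ny) = 1, Bezout's identity turns ny k PI / nx + m PI into an
   arbitrary multiple of PI / nx, which brings the y-phase into [0, PI / nx), and the z-phase
   is brought into [0, PI) by a multiple of PI.  A sign change of the coordinates is either a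
   half-turn about a coordinate axis, ambient isotopic to the identity through rotations, or
   such a half-turn followed by the mirror reflection. *)

From Stdlib Require Import Reals Arith Lra Lia ZArith.
Open Scope R_scope.

Lemma dist3_lt x1 y1 z1 x2 y2 z2 d :
  dist3 (x1, y1, z1) (x2, y2, z2) < d <->
  Rabs (x1 - x2) < d /\ Rabs (y1 - y2) < d /\ Rabs (z1 - z2) < d.
Proof. unfold dist3; rewrite !Rmax_Rlt; tauto. Qed.

Lemma Rabs_cos_sub_le a b : Rabs (cos a - cos b) <= Rabs (a - b).
Proof.
  destruct (MVT_abs cos (fun x => - sin x) b a) as [c [-> _]].
  { intros c _; apply derivable_pt_lim_cos. }
  rewrite Rabs_Ropp; rewrite <- (Rmult_1_l (Rabs (a - b))) at 2.
  apply Rmult_le_compat_r; [apply Rabs_pos | apply Rabs_le, SIN_bound].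
Qed.

Lemma Rabs_sin_sub_le a b : Rabs (sin a - sin b) <= Rabs (a - b).
Proof.
  destruct (MVT_abs sin cos b a) as [c [-> _]].
  { intros c _; apply derivable_pt_lim_sin. }
  rewrite <- (Rmult_1_l (Rabs (a - b))) at 2.
  apply Rmult_le_compat_r; [apply Rabs_pos | apply Rabs_le, COS_bound].
Qed.

Lemma rot_coord_sub_le a b th a' b' th' :
  Rabs ((a' * cos th' - b' * sin th') - (a * cos th - b * sin th)) <=
  Rabs (a' - a) + Rabs (b' - b) + (Rabs a + Rabs b) * Rabs (th' - th).
Proof.
  replace ((a' * cos th' - b' * sin th') - (a * cos th - b * sin th)) with
    (((a' - a) * cos th' + - ((b' - b) * sin th'))
     + (a * (cos th' - cos th) + - (b * (sin th' - sin th)))) by ring.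
  pose proof (Rabs_cos_sub_le th' th); pose proof (Rabs_sin_sub_le th' th).
  assert (Rabs (cos th') <= 1) by apply Rabs_le, COS_bound.
  assert (Rabs (sin th') <= 1) by apply Rabs_le, SIN_bound.
  pose proof (Rabs_pos (a' - a)); pose proof (Rabs_pos (b' - b)).
  pose proof (Rabs_pos a); pose proof (Rabs_pos b).
  pose proof (Rabs_triang ((a' - a) * cos th') (- ((b' - b) * sin th'))) as T1.
  pose proof (Rabs_triang (a * (cos th' - cos th)) (- (b * (sin th' - sin th)))) as T2.
  rewrite !Rabs_Ropp, !Rabs_mult in T1, T2.
  eapply Rle_trans; [apply Rabs_triang|]. nra.
Qed.

Definition rot_z (s : R) (p : pt) : pt :=
  let '(x, y, z) := p in
  (x * cos (PI * s) - y * sin (PI * s), x * sin (PI * s) + y * cos (PI * s), z).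

Lemma rot_z_joint_continuous t x eps : 0 < eps -> exists delta, 0 < delta /\
  forall s y, Rabs (s - t) < delta -> dist3 y x < delta ->
    dist3 (rot_z s y) (rot_z t x) < eps.
Proof.
  intro eps_gt0; destruct x as [[x1 x2] x3]; pose proof PI_RGT_0.
  set (M := Rabs x1 + Rabs x2).
  assert (M_ge0 : 0 <= M) by (pose proof (Rabs_pos x1); pose proof (Rabs_pos x2); unfold M; lra).
  set (delta := eps / (2 + M * PI)).
  assert (delta_gt0 : 0 < delta) by (apply Rdiv_lt_0_compat; nra).
  assert (delta_eq : delta * (2 + M * PI) = eps) by (unfold delta; field; nra).
  exists delta; split; [exact delta_gt0|].
  intros s [[y1 y2] y3] st_lt; rewrite !dist3_lt; intros (d1 & d2 & d3).
  assert (angle_lt : M * Rabs (PI * s - PI * t) <= M * (PI * delta)).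
  { apply Rmult_le_compat_l; [exact M_ge0|].
    rewrite <- Rmult_minus_distr_l, Rabs_mult, Rabs_pos_eq by lra; nra. }
  pose proof (rot_coord_sub_le x1 x2 (PI * t) y1 y2 (PI * s)) as est1.
  pose proof (rot_coord_sub_le x2 (- x1) (PI * t) y2 (- y1) (PI * s)) as est2.
  rewrite Rabs_Ropp in est2.
  replace (- y1 - - x1) with (- (y1 - x1)) in est2 by ring; rewrite Rabs_Ropp in est2.
  fold M in est1; replace (Rabs x2 + Rabs x1) with M in est2 by (unfold M; ring).
  unfold rot_z; rewrite dist3_lt; split; [|split].
  - nra.
  - replace (y1 * sin (PI * s) + y2 * cos (PI * s) - (x1 * sin (PI * t) + x2 * cos (PI * t)))
      with (y2 * cos (PI * s) - - y1 * sin (PI * s) - (x2 * cos (PI * t) - - x1 * sin (PI * t)))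
      by ring.
    nra.
  - assert (0 <= M * PI) by nra; nra.
Qed.

Lemma rot_z_continuous s : cont3 (rot_z s).
Proof.
  intros x eps eps_gt0.
  destruct (rot_z_joint_continuous s x eps eps_gt0) as [delta [delta_gt0 Hdelta]].
  exists delta; split; [exact delta_gt0|]; intros y xy_lt; apply Hdelta; [|exact xy_lt].
  rewrite Rminus_diag, Rabs_R0; exact delta_gt0.
Qed.

Lemma rot_zK s p : rot_z (- s) (rot_z s p) = p.
Proof.
  destruct p as [[x y] z]; unfold rot_z.
  replace (PI * - s) with (- (PI * s)) by ring; rewrite cos_neg, sin_neg.
  pose proof (sin2_cos2 (PI * s)) as sc; unfold Rsqr in sc.
  f_equal; f_equal;
    match goal with |- _ = ?v =>
      transitivity (v * (sin (PI * s) * sin (PI * s) + cos (PI * s) * cos (PI * s)));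
      [ring | rewrite sc; ring] end.
Qed.

Lemma rot_z_isotopy : ambient_isotopy rot_z.
Proof.
  split; [|split].
  - intros [[x y] z]; unfold rot_z; rewrite Rmult_0_r, cos_0, sin_0; f_equal; f_equal; ring.
  - intros t _; exists (rot_z (- t)); split; [|split; [|split]]; try apply rot_z_continuous.
    + apply rot_zK.
    + intro p; generalize (rot_zK (- t) p); rewrite Ropp_involutive; easy.
  - intros t x eps _ eps_gt0.
    destruct (rot_z_joint_continuous t x eps eps_gt0) as [delta [delta_gt0 Hdelta]].
    exists delta; split; [exact delta_gt0|]; intros s y _; apply Hdelta.
Qed.

Lemma rot_z1 x y z : rot_z 1 (x, y, z) = (- x, - y, z).
Proof. unfold rot_z; rewrite Rmult_1_r, cos_PI, sin_PI; f_equal; f_equal; ring. Qed.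

Lemma ambient_isotopy_conj (H : R -> pt -> pt) (P Q : pt -> pt) :
  ambient_isotopy H -> (forall p, Q (P p) = p) -> (forall p, P (Q p) = p) ->
  (forall a b, dist3 (P a) (P b) = dist3 a b) ->
  ambient_isotopy (fun s p => Q (H s (P p))).
Proof.
  intros [H0 [H_homeo H_joint]] PK QK P_iso.
  assert (Q_iso : forall a b, dist3 (Q a) (Q b) = dist3 a b).
  { intros a b; rewrite <- P_iso, !QK; reflexivity. }
  assert (conj_cont : forall f, cont3 f -> cont3 (fun p => Q (f (P p)))).
  { intros f f_cont x eps eps_gt0.
    destruct (f_cont (P x) eps eps_gt0) as [delta [delta_gt0 Hdelta]].
    exists delta; split; [exact delta_gt0|]; intros y xy_lt.
    rewrite Q_iso; apply Hdelta; rewrite P_iso; exact xy_lt. }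
  split; [|split].
  - intro x; rewrite H0; apply PK.
  - intros t t01; destruct (H_homeo t t01) as [g [gK [Kg [Ht_cont g_cont]]]].
    exists (fun p => Q (g (P p))); split; [|split; [|split]]; try apply conj_cont; auto.
    + intro x; rewrite QK, gK, PK; reflexivity.
    + intro y; rewrite QK, Kg, PK; reflexivity.
  - intros t x eps t01 eps_gt0.
    destruct (H_joint t (P x) eps t01 eps_gt0) as [delta [delta_gt0 Hdelta]].
    exists delta; split; [exact delta_gt0|]; intros s y s01 st_lt xy_lt.
    rewrite Q_iso; apply Hdelta; [exact s01 | exact st_lt | rewrite P_iso; exact xy_lt].
Qed.

Definition cycle3 (p : pt) : pt := let '(x, y, z) := p in (y, z, x).
Definition cycle3_inv (p : pt) : pt := let '(x, y, z) := p in (z, x, y).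

Lemma cycle3K p : cycle3_inv (cycle3 p) = p.
Proof. now destruct p as [[x y] z]. Qed.

Lemma cycle3_invK p : cycle3 (cycle3_inv p) = p.
Proof. now destruct p as [[x y] z]. Qed.

Lemma dist3_cycle3 a b : dist3 (cycle3 a) (cycle3 b) = dist3 a b.
Proof.
  destruct a as [[x y] z], b as [[x' y'] z']; unfold dist3; simpl.
  rewrite Rmax_assoc, Rmax_comm; reflexivity.
Qed.

Lemma dist3_cycle3_inv a b : dist3 (cycle3_inv a) (cycle3_inv b) = dist3 a b.
Proof. rewrite <- dist3_cycle3, !cycle3_invK; reflexivity. Qed.

Definition rot_x (s : R) (p : pt) : pt := cycle3_inv (rot_z s (cycle3 p)).
Definition rot_y (s : R) (p : pt) : pt := cycle3 (rot_z s (cycle3_inv p)).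

Lemma rot_x_isotopy : ambient_isotopy rot_x.
Proof. exact (ambient_isotopy_conj _ _ _ rot_z_isotopy cycle3K cycle3_invK dist3_cycle3). Qed.

Lemma rot_y_isotopy : ambient_isotopy rot_y.
Proof. exact (ambient_isotopy_conj _ _ _ rot_z_isotopy cycle3_invK cycle3K dist3_cycle3_inv). Qed.

Lemma rot_x1 x y z : rot_x 1 (x, y, z) = (x, - y, - z).
Proof. unfold rot_x; simpl cycle3; rewrite rot_z1; reflexivity. Qed.

Lemma rot_y1 x y z : rot_y 1 (x, y, z) = (- x, y, - z).
Proof. unfold rot_y; simpl cycle3_inv; rewrite rot_z1; reflexivity. Qed.

Lemma id_isotopy : ambient_isotopy (fun _ p => p).
Proof.
  split; [|split].
  - reflexivity.
  - intros t _; exists (fun p => p);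
      repeat split; intros x eps eps_gt0; exists eps; split; auto.
  - intros t x eps _ eps_gt0; exists eps; split; auto.
Qed.

Definition img (f : pt -> pt) (A : pt -> Prop) : pt -> Prop :=
  fun p => exists q, A q /\ f q = p.

Lemma knot_equiv_img (H : R -> pt -> pt) (f : pt -> pt) (A : pt -> Prop) :
  ambient_isotopy H -> (forall q, H 1 q = f q) -> knot_equiv A (img f A).
Proof.
  intros H_iso H1; exists H; split; [exact H_iso|]; intro p; unfold img.
  split; intros [q [Aq Hq]]; exists q; rewrite H1 in *; auto.
Qed.

Lemma knot_equiv_ext (A B B' : pt -> Prop) :
  knot_equiv A B -> (forall p, B p <-> B' p) -> knot_equiv A B'.
Proof.
  intros [H [H_iso HB]] BB'; exists H; split; [exact H_iso|]; intro p; rewrite <- BB'; apply HB.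
Qed.

Definition sign_flip (ex ey ez : R) (p : pt) : pt :=
  let '(x, y, z) := p in (ex * x, ey * y, ez * z).

Lemma sign_flip_inj ex ey ez a b : ex <> 0 -> ey <> 0 -> ez <> 0 ->
  sign_flip ex ey ez a = sign_flip ex ey ez b -> a = b.
Proof.
  destruct a as [[a1 a2] a3], b as [[b1 b2] b3]; simpl; intros ex0 ey0 ez0 E.
  injection E as E1 E2 E3.
  apply Rmult_eq_reg_l in E1, E2, E3; [subst; reflexivity | assumption..].
Qed.

Lemma knot_equiv_sign_flip (A : pt -> Prop) ex ey ez :
  (ex = 1 \/ ex = -1) -> (ey = 1 \/ ey = -1) -> (ez = 1 \/ ez = -1) -> ex * ey * ez = 1 ->
  knot_equiv A (img (sign_flip ex ey ez) A).
Proof.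
  intros [-> | ->] [-> | ->] [-> | ->] prod1; try lra.
  - apply (knot_equiv_img _ _ _ id_isotopy).
    intros [[x y] z]; simpl; f_equal; f_equal; ring.
  - apply (knot_equiv_img _ _ _ rot_x_isotopy).
    intros [[x y] z]; rewrite rot_x1; simpl; f_equal; f_equal; ring.
  - apply (knot_equiv_img _ _ _ rot_y_isotopy).
    intros [[x y] z]; rewrite rot_y1; simpl; f_equal; f_equal; ring.
  - apply (knot_equiv_img _ _ _ rot_z_isotopy).
    intros [[x y] z]; rewrite rot_z1; simpl; f_equal; f_equal; ring.
Qed.

Lemma mirror_img_sign_flip (A : pt -> Prop) ex ey ez p :
  mirror (img (sign_flip ex ey ez) A) p <-> img (sign_flip ex ey (- ez)) A p.
Proof.
  assert (flip_mirror : forall q, sign_flip ex ey (- ez) q = mirror_pt (sign_flip ex ey ez q)).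
  { intros [[x y] z]; simpl; f_equal; ring. }
  assert (mirrorK : forall q, mirror_pt (mirror_pt q) = q).
  { intros [[x y] z]; simpl; f_equal; ring. }
  unfold mirror, img; split; intros [q [Aq Hq]]; exists q; split; auto.
  - rewrite flip_mirror, Hq; apply mirrorK.
  - rewrite <- Hq, flip_mirror, mirrorK; reflexivity.
Qed.

Lemma knot_equiv_up_to_mirror_sign_flip (A : pt -> Prop) ex ey ez :
  (ex = 1 \/ ex = -1) -> (ey = 1 \/ ey = -1) -> (ez = 1 \/ ez = -1) ->
  knot_equiv_up_to_mirror A (img (sign_flip ex ey ez) A).
Proof.
  intros sx sy sz; destruct (Req_dec (ex * ey * ez) 1) as [prod1 | prod_neg1].
  - left; apply knot_equiv_sign_flip; assumption.
  - right; apply (knot_equiv_ext _ (img (sign_flip ex ey (- ez)) A)).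
    + apply knot_equiv_sign_flip; [assumption | assumption | lra |].
      destruct sx as [-> | ->], sy as [-> | ->], sz as [-> | ->]; lra.
    + intro p; symmetry; apply mirror_img_sign_flip.
Qed.

Lemma knot_equiv_up_to_mirror_ext (A B B' : pt -> Prop) :
  knot_equiv_up_to_mirror A B -> (forall p, B p <-> B' p) -> knot_equiv_up_to_mirror A B'.
Proof.
  intros [AB | AB] BB'; [left | right]; apply (knot_equiv_ext _ _ _ AB); [exact BB'|].
  intro p; apply BB'.
Qed.

Lemma cos_period_Z x j : cos (x + 2 * IZR j * PI) = cos x.
Proof.
  destruct (Z_le_gt_dec 0 j) as [j_ge0 | j_lt0].
  - rewrite <- (Z2Nat.id j), <- INR_IZR_INZ by exact j_ge0; apply cos_period.
  - rewrite <- (cos_period _ (Z.to_nat (- j))); f_equal.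
    rewrite INR_IZR_INZ, Z2Nat.id, opp_IZR by lia; ring.
Qed.

Definition alt_sign (j : Z) : R := if Z.even j then 1 else -1.

Lemma alt_sign_cases j : alt_sign j = 1 \/ alt_sign j = -1.
Proof. unfold alt_sign; destruct (Z.even j); auto. Qed.

Lemma alt_sign_neq0 j : alt_sign j <> 0.
Proof. destruct (alt_sign_cases j) as [-> | ->]; lra. Qed.

Lemma cos_add_IZR_PI x j : cos (x + IZR j * PI) = alt_sign j * cos x.
Proof.
  unfold alt_sign; destruct (Z.even j) eqn:j_even.
  - apply Z.even_spec in j_even as [m ->].
    rewrite mult_IZR, cos_period_Z; ring.
  - assert (j_odd : Z.odd j = true) by (rewrite <- Z.negb_even, j_even; reflexivity).
    apply Z.odd_spec in j_odd as [m ->].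
    replace (x + IZR (2 * m + 1) * PI) with ((x + PI) + 2 * IZR m * PI)
      by (rewrite plus_IZR, mult_IZR; ring).
    rewrite cos_period_Z, neg_cos; ring.
Qed.

Lemma exists_shift_into_period a T : 0 < T -> exists N : Z, 0 <= a + IZR N * T < T.
Proof.
  intro T_gt0; exists (- Zfloor (a / T))%Z.
  pose proof (Zfloor_bound (a / T)) as fl.
  replace (a + IZR (- Zfloor (a / T)) * T) with (T * (a / T - IZR (Zfloor (a / T))))
    by (rewrite opp_IZR; field; lra).
  split; nra.
Qed.

Definition periodic_2PI (K : R -> pt) : Prop :=
  forall t j, K (t + 2 * IZR j * PI) = K t.

Definition injective_on_period (K : R -> pt) : Prop :=
  forall s t, 0 <= s < 2 * PI -> 0 <= t < 2 * PI -> K s = K t -> s = t.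

Lemma lissajous_periodic nx ny nz px py pz : periodic_2PI (lissajous nx ny nz px py pz).
Proof.
  intros t j; unfold lissajous.
  assert (shift : forall n p, cos (INR n * (t + 2 * IZR j * PI) + p) = cos (INR n * t + p)).
  { intros n p; rewrite <- (cos_period_Z (INR n * t + p) (Z.of_nat n * j)); f_equal.
    rewrite mult_IZR, <- INR_IZR_INZ; ring. }
  rewrite !shift; reflexivity.
Qed.

Lemma exists_repr_2PI t : exists t0 j, 0 <= t0 < 2 * PI /\ t = t0 + 2 * IZR j * PI.
Proof.
  destruct (exists_shift_into_period t (2 * PI)) as [N N_bound]; [pose proof PI_RGT_0; lra|].
  exists (t + IZR N * (2 * PI)), (- N)%Z; split; [exact N_bound | rewrite opp_IZR; ring].
Qed.

Lemma eq_mod_2PI s t j :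
  0 <= s < 2 * PI -> 0 <= t < 2 * PI -> s - t = 2 * IZR j * PI -> s = t.
Proof.
  intros s_bound t_bound st; pose proof PI_RGT_0.
  assert (j_bound : -1 < IZR j < 1) by (split; apply (Rmult_lt_reg_r (2 * PI)); nra).
  destruct j_bound as [j_gt j_lt]; apply lt_IZR in j_gt, j_lt.
  replace j with 0%Z in st by lia; lra.
Qed.

Section Reparametrization.

Variables (K L : R -> pt) (f : pt -> pt) (c : R).
Hypothesis K_periodic : periodic_2PI K.
Hypothesis L_def : forall t, L t = f (K (t + c)).

Lemma curve_image_reparam p : curve_image L p <-> img f (curve_image K) p.
Proof.
  pose proof PI_RGT_0; unfold curve_image, img; split.
  - intros [t [_ <-]]; destruct (exists_repr_2PI (t + c)) as [t0 [j [t0_bound Ej]]].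
    exists (K t0); split; [exists t0; split; [lra | reflexivity]|].
    rewrite L_def, Ej, K_periodic; reflexivity.
  - intros [q [[t0 [_ <-]] <-]]; destruct (exists_repr_2PI (t0 - c)) as [t1 [j [t1_bound Ej]]].
    exists t1; split; [lra|]; rewrite L_def, <- (K_periodic t0 (- j)%Z), opp_IZR.
    f_equal; f_equal; lra.
Qed.

Lemma injective_on_period_reparam :
  (forall a b, f a = f b -> a = b) -> injective_on_period K -> injective_on_period L.
Proof.
  intros f_inj K_inj s t s_bound t_bound; rewrite !L_def; intro Kst; apply f_inj in Kst.
  destruct (exists_repr_2PI (s + c)) as [s0 [i [s0_bound Ei]]].
  destruct (exists_repr_2PI (t + c)) as [t0 [j [t0_bound Ej]]].
  rewrite Ei, Ej, !K_periodic in Kst; apply K_inj in Kst; [|assumption..]; subst t0.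
  apply (eq_mod_2PI _ _ (i - j)); [assumption.. | rewrite minus_IZR; lra].
Qed.

End Reparametrization.

Lemma coprime_bezout_R nx ny : (0 < nx)%nat -> Nat.gcd nx ny = 1%nat ->
  forall N : Z, exists k m : Z, INR ny * IZR k + INR nx * IZR m = IZR N.
Proof.
  intros nx_gt0 gcd1 N; destruct (Nat.gcd_bezout_pos nx ny nx_gt0) as [a [b ab]].
  assert (abZ : (Z.of_nat a * Z.of_nat nx - Z.of_nat b * Z.of_nat ny = 1)%Z) by lia.
  exists (- Z.of_nat b * N)%Z, (Z.of_nat a * N)%Z.
  rewrite !INR_IZR_INZ, <- !mult_IZR, <- plus_IZR; f_equal.
  rewrite <- (Z.mul_1_l N) at 3; rewrite <- abZ; ring.
Qed.

Lemma lissajous_phase_normal_form nx ny nz px py pz :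
  (0 < nx)%nat -> Nat.gcd nx ny = 1%nat ->
  exists py' pz' c (k m l : Z),
    0 <= py' < PI / INR nx /\ 0 <= pz' < PI /\
    forall t, lissajous nx ny nz 0 py' pz' t =
      sign_flip (alt_sign k) (alt_sign m) (alt_sign l) (lissajous nx ny nz px py pz (t + c)).
Proof.
  intros nx_gt0 gcd1; pose proof PI_RGT_0.
  assert (nx_pos : 0 < INR nx) by (apply lt_0_INR; exact nx_gt0).
  set (u := py - INR ny * px / INR nx).
  destruct (exists_shift_into_period u (PI / INR nx)) as [N N_bound];
    [apply Rdiv_lt_0_compat; assumption|].
  destruct (coprime_bezout_R nx ny nx_gt0 gcd1 N) as [k [m km]].
  set (c := (IZR k * PI - px) / INR nx).
  set (w := INR nz * c + pz).
  destruct (exists_shift_into_period w PI) as [l l_bound]; [assumption|].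
  exists (u + IZR N * (PI / INR nx)), (w + IZR l * PI), c, (- k)%Z, m, l.
  split; [exact N_bound|]; split; [exact l_bound|].
  intro t; unfold lissajous, sign_flip; rewrite <- !cos_add_IZR_PI.
  replace (INR nx * (t + c) + px + IZR (- k) * PI) with (INR nx * t + 0)
    by (unfold c; rewrite opp_IZR; field; lra).
  replace (INR ny * (t + c) + py + IZR m * PI) with (INR ny * t + (u + IZR N * (PI / INR nx)))
    by (unfold c, u; rewrite <- km; field; lra).
  replace (INR nz * (t + c) + pz + IZR l * PI) with (INR nz * t + (w + IZR l * PI))
    by (unfold w; ring).
  reflexivity.
Qed.

Theorem theorem3 :
  forall (nx ny nz : nat),
    (0 < nx)%nat -> (0 < ny)%nat -> (0 < nz)%nat ->
    Nat.gcd nx ny = 1%nat -> Nat.gcd ny nz = 1%nat -> Nat.gcd nx nz = 1%nat ->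
    forall px py pz : R,
      embedded nx ny nz px py pz ->
      exists py' pz' : R,
        0 <= py' <= PI / INR nx /\ 0 <= pz' <= PI /\
        embedded nx ny nz 0 py' pz' /\
        knot_equiv_up_to_mirror
          (curve_image (lissajous nx ny nz px py pz))
          (curve_image (lissajous nx ny nz 0 py' pz')).
Proof.
  (* Only gcd(nx, ny) = 1 is needed. *)
  intros nx ny nz nx_gt0 _ _ gcd_xy _ _ px py pz K_emb.
  destruct (lissajous_phase_normal_form nx ny nz px py pz nx_gt0 gcd_xy)
    as (py' & pz' & c & k & m & l & py'_bound & pz'_bound & L_def).
  pose proof (lissajous_periodic nx ny nz px py pz) as K_periodic.
  exists py', pz'; split; [lra|]; split; [lra|]; split.
  - apply (injective_on_period_reparam _ _ _ c K_periodic L_def); [|exact K_emb].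
    intros a b; apply sign_flip_inj; apply alt_sign_neq0.
  - apply (knot_equiv_up_to_mirror_ext _ (img (sign_flip (alt_sign k) (alt_sign m) (alt_sign l))
                                             (curve_image (lissajous nx ny nz px py pz)))).
    + apply knot_equiv_up_to_mirror_sign_flip; apply alt_sign_cases.
    + intro p; symmetry; apply (curve_image_reparam _ _ _ c K_periodic L_def).
Qed.
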